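(* Let $\mathcal{H}$ be a complex Hilbert space of finite dimension $n\ge 2$, let $\mathcal{B}(\mathcal{H})_{\mathrm{sa}}$ be the real vector space of selfadjoint operators on $\mathcal{H}$, and for $k\in\mathbb{N}$ let $\mathcal{P}_k(\mathcal{H})$ denote the set of orthogonal projections on $\mathcal{H}$ of rank $k$. Let $k<n$ and let $\mathcal{L}\colon\mathcal{B}(\mathcal{H})_{\mathrm{sa}}\to\mathcal{B}(\mathcal{H})_{\mathrm{sa}}$ be a linear map with $\mathcal{L}(\mathcal{P}_k(\mathcal{H}))=\mathcal{P}_k(\mathcal{H})$. Then $\mathcal{L}$ maps $\mathcal{B}(\mathcal{H})_{\mathrm{sa}}$ bijectively onto itself. *)

From HB Require Import structures.
From mathcomp Require Import all_boot all_order all_algebra.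
From mathcomp Require Import reals.
From mathcomp Require Export complex.
Set Implicit Arguments. Unset Strict Implicit. Unset Printing Implicit Defensive.
Import Order.TTheory GRing.Theory Num.Theory.
Local Open Scope ring_scope.
Local Open Scope complex_scope.

Definition adjmx (R : realType) (n : nat) (A : 'M[R[i]]_n) : 'M[R[i]]_n :=
  (map_mx (@conjc R) A)^T.

Definition selfadj (R : realType) (n : nat) (A : 'M[R[i]]_n) : Prop :=
  adjmx A = A.

Definition proj_rank (R : realType) (n k : nat) (P : 'M[R[i]]_n) : Prop :=
  selfadj P /\ P *m P = P /\ \rank P = k.

(* L is a real-linear map B(H)_sa -> B(H)_sa (its values outside B(H)_sa are irrelevant). *)
Definition sa_linear (R : realType) (n : nat) (L : 'M[R[i]]_n -> 'M[R[i]]_n) : Prop :=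
  (forall A, selfadj A -> selfadj (L A)) /\
  (forall (a b : R) A B, selfadj A -> selfadj B ->
     L ((a%:C) *: A + (b%:C) *: B) = (a%:C) *: L A + (b%:C) *: L B).

(* The real span of the rank-k orthogonal projections (0 < k < n) is the whole
   space of selfadjoint matrices.  Fix i <> j and k - 1 coordinates s_c outside
   {i, j}.  For every unit row vector u supported on {i, j}, u^* u plus the
   coordinate projections E_(s_c s_c) equals W^* W for a matrix W with
   orthonormal rows, hence is a rank-k projection; subtracting the case u = e_i
   puts u^* u - E_ii in the span.  Taking u = e_j and u = (e_i + z e_j)/sqrt 2
   with |z| = 1 yields E_jj - E_ii and z E_ij + z^* E_ji, and one coordinate
   projection then yields E_ii; these span the selfadjoint matrices.  Since
   P_k is contained in L(P_k), L maps onto the selfadjoint matrices.  The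
   complex-linear extension H + i K |-> L H + i L K of L is then a surjective
   linear endomorphism of the finite-dimensional space of n x n matrices,
   hence injective, and so is L. *)

From HB Require Import structures.
From mathcomp Require Import all_boot all_order all_algebra.
From mathcomp Require Import reals complex.
From mathcomp.algebra_tactics Require Import ring.
From mathcomp Require Import zify.
Import Order.TTheory GRing.Theory Num.Theory.
Set Implicit Arguments. Unset Strict Implicit. Unset Printing Implicit Defensive.
Local Open Scope complex_scope.
Local Open Scope ring_scope.
Local Open Scope sesquilinear_scope.

Lemma linear_surj_inj (F : fieldType) m n (f : 'M[F]_(m, n) -> 'M[F]_(m, n)) :
  linear f -> (forall B, exists A, f A = B) -> injective f.
Proof.
move=> f_lin f_onto.
pose g : {linear 'M[F]_(m, n) -> 'M[F]_(m, n)} :=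
  HB.pack f (GRing.isLinear.Build _ _ _ _ f f_lin).
have g_full : row_full (lin_mx g).
  rewrite -sub1mx; apply/row_subP => r; rewrite row1.
  have [A fA] := f_onto (vec_mx (delta_mx 0 r)).
  by rewrite -[delta_mx 0 r]vec_mxK -fA -[f A]/(g A) -mul_vec_lin submxMl.
have g_free : row_free (lin_mx g) by rewrite row_free_unit -row_full_unit.
move=> A B /(congr1 mxvec); rewrite -[f A]/(g A) -[f B]/(g B) -!mul_vec_lin.
by move/(row_free_inj g_free)/(can_inj mxvecK).
Qed.

Lemma injection_in_set (T : finType) (A : {set T}) m :
  (m <= #|A|)%N -> exists2 s : 'I_m -> T, injective s & forall c, s c \in A.
Proof.
move=> mA; exists (fun c => enum_val (widen_ord mA c)) => [c d /enum_val_inj|c].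
  by move=> [] /val_inj.
exact: enum_valP.
Qed.

Section ConjTranspose.
Context {C : numClosedFieldType}.

Lemma trmxCD m n (A B : 'M[C]_(m, n)) : (A + B)^t* = A^t* + B^t*.
Proof. by rewrite linearD map_mxD. Qed.

Lemma trmxCN m n (A : 'M[C]_(m, n)) : (- A)^t* = - A^t*.
Proof. by rewrite linearN map_mxN. Qed.

Lemma trmxCZ m n a (A : 'M[C]_(m, n)) : (a *: A)^t* = a^* *: A^t*.
Proof. by rewrite linearZ map_mxZ. Qed.

Lemma trmxC_mul m n p (A : 'M[C]_(m, n)) (B : 'M[C]_(n, p)) :
  (A *m B)^t* = B^t* *m A^t*.
Proof. by rewrite trmx_mul map_mxM. Qed.

Lemma trmxC_delta m n (i : 'I_m) (j : 'I_n) :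
  (delta_mx i j : 'M[C]_(m, n))^t* = delta_mx j i.
Proof. by apply/matrixP => r t; rewrite !mxE conjC_nat andbC. Qed.

Lemma trmxC_col_mx_mul m1 m2 n (A : 'M[C]_(m1, n)) (B : 'M[C]_(m2, n)) :
  (col_mx A B)^t* *m col_mx A B = A^t* *m A + B^t* *m B.
Proof. by rewrite tr_col_mx map_row_mx mul_row_col. Qed.

Lemma col_mx_unitary m1 m2 n (A : 'M[C]_(m1, n)) (B : 'M[C]_(m2, n)) :
  A \is unitarymx -> B \is unitarymx -> B *m A^t* = 0 -> col_mx A B \is unitarymx.
Proof.
move=> /unitarymxP uA /unitarymxP uB BA0; apply/unitarymxP.
have AB0 : A *m B^t* = 0 by rewrite -[A]trmxCK -trmxC_mul BA0 trmx0 map_mx0.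
by rewrite tr_col_mx map_row_mx mul_col_row uA uB AB0 BA0 -scalar_mx_block.
Qed.

Lemma delta_row_unitary n (i : 'I_n) : ('e_i : 'rV[C]_n) \is unitarymx.
Proof.
apply/unitarymxP; rewrite trmxC_delta mul_delta_mx.
by apply/matrixP => r t; rewrite !ord1 !mxE.
Qed.

Lemma rowsub1_unitary m n (s : 'I_m -> 'I_n) :
  injective s -> rowsub s (1%:M : 'M[C]_n) \is unitarymx.
Proof.
move=> s_inj; apply/unitarymxP; rewrite -rowsubE.
by apply/matrixP => a b; rewrite !mxE conjC_nat (inj_eq s_inj) eq_sym.
Qed.

Lemma trmxC_rowsub1_mul m n (s : 'I_m -> 'I_n) :
  (rowsub s (1%:M : 'M[C]_n))^t* *m rowsub s 1%:M = \sum_c delta_mx (s c) (s c).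
Proof.
apply/matrixP => p q; rewrite !mxE summxE; apply: eq_bigr => c _.
by rewrite !mxE conjC_nat -natrM mulnb !(eq_sym (s c)).
Qed.

Lemma trmxC_pair_mul n (i j : 'I_n) (a b : C) :
  (a *: 'e_i + b *: 'e_j : 'rV[C]_n)^t* *m (a *: 'e_i + b *: 'e_j) =
  a^* * a *: delta_mx i i + a^* * b *: delta_mx i j
  + b^* * a *: delta_mx j i + b^* * b *: delta_mx j j.
Proof.
rewrite trmxCD !trmxCZ !trmxC_delta mulmxDl !mulmxDr -!scalemxAl -!scalemxAr.
by rewrite !mul_delta_mx !scalerA !addrA.
Qed.

Lemma pair_unitary n (i j : 'I_n) (a b : C) : i != j -> a * a^* + b * b^* = 1 ->
  (a *: 'e_i + b *: 'e_j : 'rV[C]_n) \is unitarymx.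
Proof.
move=> ij ab1; have ji : j != i by rewrite eq_sym.
apply/unitarymxP.
rewrite trmxCD !trmxCZ !trmxC_delta mulmxDl !mulmxDr -!scalemxAl -!scalemxAr.
rewrite !mul_delta_mx !mul_delta_mx_0 // !scaler0 addr0 add0r !scalerA.
by apply/matrixP => r t; rewrite !ord1 !mxE /= !mulr1 -ab1.
Qed.

Definition herm_delta_mx n (z : C) (i j : 'I_n) : 'M[C]_n :=
  z *: delta_mx i j + z^* *: delta_mx j i.

Lemma herm_delta_rect n (z : C) (i j : 'I_n) :
  herm_delta_mx z i j = 'Re z *: herm_delta_mx 1 i j + 'Im z *: herm_delta_mx 'i i j.
Proof.
rewrite /herm_delta_mx conjC1 conjCi {1 2}(Crect z) conjC_rect ?Creal_Re ?Creal_Im //.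
by apply/matrixP => r t; rewrite !mxE; ring.
Qed.

Lemma herm_delta_sum n (A : 'M[C]_n) :
  A^t* = A -> A = \sum_i \sum_j 2^-1 *: herm_delta_mx (A i j) i j.
Proof.
move=> AJ; have AJ_ij i j : (A i j)^* = A j i by rewrite -[in RHS]AJ !mxE.
transitivity (2^-1 *: (A + A)).
  by rewrite -mulr2n -scaler_nat scalerA mulVf ?pnatr_eq0 ?scale1r.
rewrite {1}[A]matrix_sum_delta {2}[A]matrix_sum_delta [X in _ + X]exchange_big.
rewrite -big_split scaler_sumr; apply: eq_bigr => i _.
rewrite -big_split scaler_sumr; apply: eq_bigr => j _.
by rewrite /herm_delta_mx AJ_ij.
Qed.

End ConjTranspose.

Section HermitianParts.
Context {C : numClosedFieldType} {n : nat}.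
Implicit Types A B : 'M[C]_n.

Definition hermRe A : 'M[C]_n := 2^-1 *: (A + A^t*).
Definition hermIm A : 'M[C]_n := (2^-1 * 'i) *: (A^t* - A).

Let two_neq0 : (2 : C) != 0. Proof. by rewrite pnatr_eq0. Qed.
Let conj_half : (2^-1 : C)^* = 2^-1. Proof. by rewrite fmorphV rmorph_nat. Qed.
Let sqri : 'i * 'i = -1 :> C. Proof. by rewrite -expr2 sqrCi. Qed.

Lemma hermRe_herm A : (hermRe A)^t* = hermRe A.
Proof. by rewrite /hermRe trmxCZ trmxCD trmxCK conj_half addrC. Qed.

Lemma hermIm_herm A : (hermIm A)^t* = hermIm A.
Proof.
rewrite /hermIm trmxCZ trmxCD trmxCN trmxCK rmorphM /= conj_half conjCi.
by rewrite mulrN scaleNr -scalerN opprB.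
Qed.

Lemma hermRe_add_hermIm A : hermRe A + 'i *: hermIm A = A.
Proof.
rewrite /hermRe /hermIm scalerA mulrCA sqri mulrN1 scaleNr -scalerBr.
by rewrite opprB addrACA subrr addr0 -mulr2n -scaler_nat scalerA mulVf ?scale1r.
Qed.

Lemma hermReD A B : hermRe (A + B) = hermRe A + hermRe B.
Proof. by rewrite /hermRe trmxCD -scalerDr addrACA. Qed.

Lemma hermImD A B : hermIm (A + B) = hermIm A + hermIm B.
Proof. by rewrite /hermIm trmxCD opprD addrACA -scalerDr. Qed.

Lemma hermReZ a A : a \is Num.real -> hermRe (a *: A) = a *: hermRe A.
Proof. by move=> /CrealP aJ; rewrite /hermRe trmxCZ aJ -scalerDr !scalerA mulrC. Qed.

Lemma hermImZ a A : a \is Num.real -> hermIm (a *: A) = a *: hermIm A.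
Proof. by move=> /CrealP aJ; rewrite /hermIm trmxCZ aJ -scalerBr !scalerA mulrC. Qed.

Lemma hermRe_iZ A : hermRe ('i *: A) = - hermIm A.
Proof.
rewrite /hermRe /hermIm trmxCZ conjCi.
by apply/matrixP => r t; rewrite !mxE; ring.
Qed.

Lemma hermIm_iZ A : hermIm ('i *: A) = hermRe A.
Proof.
rewrite /hermIm /hermRe trmxCZ conjCi; apply/matrixP => r t; rewrite !mxE.
transitivity (- ('i * 'i) * 2^-1 * (A r t + A^t* r t)); first by rewrite !mxE; ring.
by rewrite sqri opprK mul1r !mxE.
Qed.

Lemma hermRe_id A : A^t* = A -> hermRe A = A.
Proof. by move=> AJ; rewrite /hermRe AJ -mulr2n -scaler_nat scalerA mulVf ?scale1r. Qed.

Lemma hermIm_eq0 A : A^t* = A -> hermIm A = 0.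
Proof. by move=> AJ; rewrite /hermIm AJ subrr scaler0. Qed.

End HermitianParts.

Section Complexification.
Context {C : numClosedFieldType} {n : nat} (L : 'M[C]_n -> 'M[C]_n).
Hypothesis L_lin : forall a A B, a \is Num.real -> A^t* = A -> B^t* = B ->
  L (a *: A + B) = a *: L A + L B.

Let herm0 : (0 : 'M[C]_n)^t* = 0. Proof. by rewrite trmx0 map_mx0. Qed.

Lemma herm_comb a (A B : 'M[C]_n) : a \is Num.real -> A^t* = A -> B^t* = B ->
  (a *: A + B)^t* = a *: A + B.
Proof. by move=> /CrealP aJ AJ BJ; rewrite trmxCD trmxCZ aJ AJ BJ. Qed.

Lemma herm_linear0 : L 0 = 0.
Proof.
have := L_lin (real1 _) herm0 herm0; rewrite scaler0 addr0 scale1r.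
by rewrite -[X in X = _]addr0 => /addrI.
Qed.

Lemma herm_linearD A B : A^t* = A -> B^t* = B -> L (A + B) = L A + L B.
Proof. by move=> AJ BJ; have := L_lin (real1 _) AJ BJ; rewrite !scale1r. Qed.

Lemma herm_linearZ a A : a \is Num.real -> A^t* = A -> L (a *: A) = a *: L A.
Proof.
move=> a_real AJ; have := L_lin a_real AJ herm0.
by rewrite !addr0 herm_linear0 addr0.
Qed.

Lemma herm_linearN A : A^t* = A -> L (- A) = - L A.
Proof. by move=> AJ; rewrite -scaleN1r herm_linearZ ?rpredN1 // scaleN1r. Qed.

Definition herm_image B := exists2 A, A^t* = A & L A = B.

Lemma herm_image0 : herm_image 0.
Proof. by exists 0; rewrite ?herm0 ?herm_linear0. Qed.

Lemma herm_image_comb a B1 B2 : a \is Num.real ->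
  herm_image B1 -> herm_image B2 -> herm_image (a *: B1 + B2).
Proof.
move=> a_real [A1 A1J <-] [A2 A2J <-].
by exists (a *: A1 + A2); [exact: herm_comb | exact: L_lin].
Qed.

Definition complexify A : 'M[C]_n := L (hermRe A) + 'i *: L (hermIm A).

Lemma complexify_linear : linear complexify.
Proof.
have cD A B : complexify (A + B) = complexify A + complexify B.
  rewrite /complexify hermReD hermImD.
  rewrite (herm_linearD (hermRe_herm A) (hermRe_herm B)).
  rewrite (herm_linearD (hermIm_herm A) (hermIm_herm B)).
  by rewrite scalerDr addrACA.
have cZ a A : a \is Num.real -> complexify (a *: A) = a *: complexify A.
  move=> a_real; rewrite /complexify hermReZ ?hermImZ //.
  rewrite (herm_linearZ a_real (hermRe_herm A)) (herm_linearZ a_real (hermIm_herm A)).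
  by rewrite scalerDr !scalerA [a * _]mulrC.
have cI A : complexify ('i *: A) = 'i *: complexify A.
  rewrite /complexify hermRe_iZ hermIm_iZ (herm_linearN (hermIm_herm A)).
  by rewrite scalerDr scalerA -expr2 sqrCi scaleN1r addrC.
move=> c A B; rewrite cD; congr (_ + _).
rewrite [c]Crect scalerDl -scalerA cD cZ ?Creal_Re // cI cZ ?Creal_Im //.
by rewrite scalerDl scalerA.
Qed.

Lemma complexify_herm A : A^t* = A -> complexify A = L A.
Proof.
move=> AJ.
by rewrite /complexify hermRe_id // hermIm_eq0 // herm_linear0 scaler0 addr0.
Qed.

Lemma herm_onto_inj : (forall B, B^t* = B -> herm_image B) ->
  forall A B, A^t* = A -> B^t* = B -> L A = L B -> A = B.
Proof.
move=> L_onto A B AJ BJ LAB.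
apply: (linear_surj_inj complexify_linear); last by rewrite !complexify_herm.
move=> Y; have [Y1 Y1J LY1] := L_onto _ (hermRe_herm Y).
have [Y2 Y2J LY2] := L_onto _ (hermIm_herm Y).
exists (Y1 + 'i *: Y2).
rewrite /complexify hermReD hermImD hermRe_iZ hermIm_iZ.
by rewrite !hermRe_id ?hermIm_eq0 // subr0 add0r LY1 LY2 hermRe_add_hermIm.
Qed.

End Complexification.

Section RealSpan.
Context {C : numClosedFieldType} {n : nat} (S : 'M[C]_n -> Prop).
Hypothesis S0 : S 0.
Hypothesis S_comb : forall a A B, a \is Num.real -> S A -> S B -> S (a *: A + B).

Lemma span_add A B : S A -> S B -> S (A + B).
Proof. by move=> SA SB; rewrite -[A]scale1r; apply: S_comb; rewrite ?real1. Qed.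

Lemma span_scale a A : a \is Num.real -> S A -> S (a *: A).
Proof. by move=> a_real SA; rewrite -[_ *: _]addr0; apply: S_comb. Qed.

Lemma span_sub A B : S A -> S B -> S (A - B).
Proof. by move=> SA SB; rewrite addrC -scaleN1r; apply: S_comb; rewrite ?rpredN1. Qed.

Lemma span_sum (I : finType) (F : I -> 'M[C]_n) : (forall i, S (F i)) -> S (\sum_i F i).
Proof. by move=> SF; apply: big_ind => // A B; apply: span_add. Qed.

Variable k : nat.
Hypothesis k_lt_n : (k.+1 < n)%N.
Hypothesis S_coisometry :
  forall W : 'M[C]_(k.+1, n), W \is unitarymx -> S (W^t* *m W).

Let realVn m : (m%:R^-1 : C) \is Num.real. Proof. by rewrite rpredV realn. Qed.

Let delta_row_eq0 (i r : 'I_n) : r != i -> ('e_i : 'rV[C]_n) 0 r = 0.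
Proof. by move=> /negPf ri; rewrite mxE ri andbF. Qed.

Lemma avoid_pair (i j : 'I_n) :
  exists2 s : 'I_k -> 'I_n, injective s & forall c, s c != i /\ s c != j.
Proof.
have : (k <= #|~: [set i; j]|)%N.
  rewrite cardsCs setCK card_ord.
  have : (#|[set i; j]| <= 2)%N by rewrite cards2; case: (_ != _).
  lia.
case/injection_in_set => s s_inj s_out; exists s => // c.
by move: (s_out c); rewrite !inE negb_or => /andP.
Qed.

Lemma span_outer_add_coord (u : 'rV[C]_n) (s : 'I_k -> 'I_n) :
  u \is unitarymx -> injective s -> (forall c, u 0 (s c) = 0) ->
  S (u^t* *m u + \sum_c delta_mx (s c) (s c)).
Proof.
move=> u_unitary s_inj u_s.
have su0 : rowsub s 1%:M *m u^t* = 0.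
  by rewrite -rowsubE; apply/matrixP => c l; rewrite ord1 !mxE u_s conjC0.
rewrite -trmxC_rowsub1_mul -trmxC_col_mx_mul.
exact: S_coisometry (col_mx_unitary u_unitary (rowsub1_unitary s_inj) su0).
Qed.

Lemma span_outer_sub_delta (i j : 'I_n) (u : 'rV[C]_n) : u \is unitarymx ->
  (forall r, r != i -> r != j -> u 0 r = 0) -> S (u^t* *m u - delta_mx i i).
Proof.
move=> u_unitary u_supp; have [s s_inj s_out] := avoid_pair i j.
have u_s c : u 0 (s c) = 0 by have [] := s_out c; exact: u_supp.
have ei_s c : ('e_i : 'rV[C]_n) 0 (s c) = 0 by exact/delta_row_eq0/(s_out c).1.
have := span_sub (span_outer_add_coord u_unitary s_inj u_s)
  (span_outer_add_coord (delta_row_unitary i) s_inj ei_s).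
by rewrite trmxC_delta mul_delta_mx opprD addrACA subrr addr0.
Qed.

Lemma span_delta_sub (i j : 'I_n) : i != j -> S (delta_mx j j - delta_mx i i).
Proof.
move=> ij; have := span_outer_sub_delta (i := i) (j := j) (delta_row_unitary j).
rewrite trmxC_delta mul_delta_mx; apply=> r _.
exact: delta_row_eq0.
Qed.

Lemma span_delta (i : 'I_n) : S (delta_mx i i).
Proof.
have [j ij] : exists j : 'I_n, i != j.
  have n_gt1 : (1 < n)%N by lia.
  have [->|i0] := eqVneq i (Ordinal (ltnW n_gt1)); last by exists (Ordinal (ltnW n_gt1)).
  by exists (Ordinal n_gt1).
have [s s_inj s_out] := avoid_pair i j.
have ei_s c : ('e_i : 'rV[C]_n) 0 (s c) = 0 by exact/delta_row_eq0/(s_out c).1.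
have := span_outer_add_coord (delta_row_unitary i) s_inj ei_s.
rewrite trmxC_delta mul_delta_mx => SP.
have SD : S (\sum_c (delta_mx (s c) (s c) - delta_mx i i)).
  by apply: span_sum => c; apply: span_delta_sub; rewrite eq_sym; case: (s_out c).
(* (k + 1) E_ii = (E_ii + \sum_c E_(s c)) - \sum_c (E_(s c) - E_ii) *)
have := span_scale (realVn k.+1) (span_sub SP SD).
rewrite sumrB sumr_const card_ord opprB -addrA subrKC -mulrS -scaler_nat scalerA.
by rewrite mulVf ?pnatr_eq0 ?scale1r.
Qed.

Lemma span_herm_delta_unit (i j : 'I_n) (z : C) :
  i != j -> z^* * z = 1 -> S (herm_delta_mx z i j).
Proof.
move=> ij z1; pose t := sqrtC (2^-1 : C).
have tJ : t^* = t by rewrite geC0_conj // sqrtC_ge0 invr_ge0 ler0n.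
have tt : t * t = 2^-1 by rewrite -expr2 sqrtCK.
have tzJ : (t * z)^* = t * z^* by rewrite rmorphM /= tJ.
pose u : 'rV[C]_n := t *: 'e_i + (t * z) *: 'e_j.
have u_unitary : u \is unitarymx.
  apply: pair_unitary => //; rewrite tJ tzJ.
  transitivity (t * t * (1 + z^* * z)); first by ring.
  by rewrite z1 tt; field.
have u_supp r : r != i -> r != j -> u 0 r = 0.
  by move=> ri rj; rewrite !mxE eqxx (negPf ri) (negPf rj) !mulr0 addr0.
have ji : j != i by rewrite eq_sym.
have -> : herm_delta_mx z i j =
    2 *: (u^t* *m u - delta_mx i i) + (delta_mx i i - delta_mx j j).
  have c1 : t^* * t = 2^-1 by rewrite tJ.
  have c2 : t^* * (t * z) = 2^-1 * z by rewrite tJ mulrA tt.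
  have c3 : (t * z)^* * t = 2^-1 * z^* by rewrite tzJ mulrAC tt.
  have c4 : (t * z)^* * (t * z) = 2^-1 by rewrite tzJ mulrACA tt z1 mulr1.
  by rewrite trmxC_pair_mul c1 c2 c3 c4; apply/matrixP => r c; rewrite !mxE; field.
exact: S_comb (realn _ 2) (span_outer_sub_delta u_unitary u_supp) (span_delta_sub ji).
Qed.

Lemma span_herm_delta (i j : 'I_n) (z : C) : S (herm_delta_mx z i j).
Proof.
have [S1 Si] : S (herm_delta_mx 1 i j) /\ S (herm_delta_mx 'i i j).
  have [<-|ij] := eqVneq i j.
    rewrite /herm_delta_mx conjC1 conjCi scale1r scaleNr subrr.
    by split; [apply: span_add; apply: span_delta | ].
  split; apply: span_herm_delta_unit => //; first by rewrite conjC1 mulr1.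
  by rewrite conjCi mulNr -expr2 sqrCi opprK.
rewrite herm_delta_rect.
exact: S_comb (Creal_Re z) S1 (span_scale (Creal_Im z) Si).
Qed.

Lemma span_herm B : B^t* = B -> S B.
Proof.
move=> BJ; rewrite (herm_delta_sum BJ).
apply: span_sum => i; apply: span_sum => j.
exact: span_scale (realVn 2) (span_herm_delta i j _).
Qed.

End RealSpan.

Lemma selfadjE (R : realType) n (A : 'M[R[i]]_n) : selfadj A = (A^t* = A).
Proof. by rewrite /selfadj /adjmx map_trmx. Qed.

Lemma proj_rank_unitary (R : realType) m n (W : 'M[R[i]]_(m, n)) :
  W \is unitarymx -> proj_rank m (W^t* *m W).
Proof.
move=> W_unitary; have WWW : W *m (W^t* *m W) = W.
  by rewrite mulmxA (unitarymxP W_unitary) mul1mx.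
split; [|split].
- by rewrite selfadjE trmxC_mul trmxCK.
- by rewrite mulmxA mulmxtVK.
apply/eqP; rewrite eqn_leq (leq_trans (mxrankM_maxl _ _) (rank_leq_col _)) /=.
by rewrite -[X in (X <= _)%N](mxrank_unitary W_unitary) -{1}WWW mxrankM_maxr.
Qed.

Lemma sa_linear_real (R : realType) n (L : 'M[R[i]]_n -> 'M[R[i]]_n) :
  sa_linear L -> forall a A B, a \is Num.real -> A^t* = A -> B^t* = B ->
  L (a *: A + B) = a *: L A + L B.
Proof.
move=> [_ L_lin] a A B /complex_realP[r ->]; rewrite -!selfadjE => sA sB.
by have := L_lin r 1 A B sA sB; rewrite rmorph1 !scale1r.
Qed.

Theorem lemma2 (R : realType) (n k : nat) (L : 'M[R[i]]_n -> 'M[R[i]]_n) :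
  (2 <= n)%N -> (1 <= k)%N -> (k < n)%N ->
  sa_linear L ->
  (forall P, proj_rank k P -> proj_rank k (L P)) ->
  (forall Q, proj_rank k Q -> exists P, proj_rank k P /\ L P = Q) ->
  (forall A B, selfadj A -> selfadj B -> L A = L B -> A = B) /\
  (forall B, selfadj B -> exists A, selfadj A /\ L A = B).
Proof.
move=> _ k_gt0 k_lt_n L_sa _ L_proj_onto.
have L_lin := sa_linear_real L_sa.
have L_onto B : B^t* = B -> herm_image L B.
  case: k k_gt0 k_lt_n L_proj_onto => // k _ k_lt_n L_proj_onto.
  apply: (span_herm (herm_image0 L_lin) (herm_image_comb L_lin) k_lt_n) => W W_unitary.
  have [A [[A_sa _] <-]] := L_proj_onto _ (proj_rank_unitary W_unitary).
  by exists A; rewrite -?selfadjE.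
split=> [A B|B]; rewrite !selfadjE; first exact: herm_onto_inj L_lin L_onto A B.
by case/L_onto => A; rewrite -selfadjE; exists A.
Qed.
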